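(* The four $3$-Sylow subgroups of $Fr(162\times 4)$ are $\mathcal S_3(F)$, $V_2\mathcal S_3(F)V_2^{-1}$, $V_3\mathcal S_3(F)V_3^{-1}$ and $V_4\mathcal S_3(F)V_4^{-1}$, and these four subgroups are pairwise distinct.
   Context: Let $\omega=e^{2i\pi/3}$, $J$ the $3\times3$ antidiagonal matrix with antidiagonal entries $1$. $G_1=\mathrm{diag}(e^{7i\pi/9},-e^{4i\pi/9},-e^{7i\pi/9})$, $G_2=\begin{pmatrix}-\tfrac12 e^{4i\pi/9}&\tfrac{1}{\sqrt2}e^{7i\pi/9}&\tfrac12 e^{4i\pi/9}\\ \tfrac{1}{\sqrt2}e^{7i\pi/9}&0&\tfrac{1}{\sqrt2}e^{7i\pi/9}\\ \tfrac12 e^{4i\pi/9}&\tfrac{1}{\sqrt2}e^{7i\pi/9}&-\tfrac12 e^{4i\pi/9}\end{pmatrix}$, $FUM=-\omega J$, $Fr(162\times 4)=\langle G_1,G_2,FUM\rangle$ (order $648$). $A=G_1G_2^2G_1^{-1}$, $B=G_1G_2^{-2}G_1$, $\mathcal N=\langle A,B\rangle$, $H_3=\begin{pmatrix}\frac12&\frac1{\sqrt2}&-\frac12\\\frac1{\sqrt2}&0&\frac1{\sqrt2}\\\frac12&-\frac1{\sqrt2}&-\frac12\end{pmatrix}$, $\mathcal S_3(F)=\mathcal N\cup\mathcal N H_3\cup\mathcal N H_3^2$ (the unique $3$-Sylow subgroup of $\langle G_1,G_2\rangle$). $V_2=(FUM)^3=-J$, $V_3=G_1(FUM)^3G_1^{-1}=\begin{pmatrix}0&0&1\\0&-1&0\\1&0&0\end{pmatrix}$,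 $V_4=V_3V_2=\mathrm{diag}(-1,1,-1)$, $\mathcal V=\{I_3,V_2,V_3,V_4\}$. *)

From HB Require Import structures.
From mathcomp Require Import all_boot all_order all_algebra all_field.
Set Implicit Arguments. Unset Strict Implicit. Unset Printing Implicit Defensive.
Import Order.TTheory GRing.Theory Num.Theory.
Local Open Scope ring_scope.

Notation M3 := 'M[algC]_3.

(* zeta = e^{i pi/9}: the 9th root of -1 with minimal nonnegative argument *)
Definition zeta : algC := 9.-root (-1).
Definition omega : algC := zeta ^+ 6.
Definition e7 : algC := zeta ^+ 7.
Definition e4 : algC := zeta ^+ 4.
Definition isq2 : algC := (sqrtC 2)^-1.
Definition half : algC := 2^-1.

Definition mx3 (a b c d e f g h k : algC) : M3 :=
  \matrix_(i < 3, j < 3)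
    nth 0 (nth [::] [:: [:: a; b; c]; [:: d; e; f]; [:: g; h; k]] i) j.

Definition Jmx : M3 := mx3 0 0 1 0 1 0 1 0 0.
Definition G1 : M3 := mx3 e7 0 0  0 (- e4) 0  0 0 (- e7).
Definition G2 : M3 :=
  mx3 (- (half * e4)) (isq2 * e7) (half * e4)
      (isq2 * e7) 0 (isq2 * e7)
      (half * e4) (isq2 * e7) (- (half * e4)).
Definition FUM : M3 := - (omega *: Jmx).
Definition A : M3 := G1 * G2 ^+ 2 * G1^-1.
Definition B : M3 := G1 * (G2 ^+ 2)^-1 * G1.
Definition H3 : M3 :=
  mx3 half isq2 (- half)  isq2 0 isq2  half (- isq2) (- half).
Definition V2 : M3 := FUM ^+ 3.
Definition V3 : M3 := G1 * FUM ^+ 3 * G1^-1.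
Definition V4 : M3 := V3 * V2.

Inductive gen (S : seq M3) : M3 -> Prop :=
| gen1 : gen S 1
| genM g x : g \in S -> gen S x -> gen S (g * x)
| genV g x : g \in S -> gen S x -> gen S (g^-1 * x).

Definition Fr : M3 -> Prop := gen [:: G1; G2; FUM].
Definition Ngrp : M3 -> Prop := gen [:: A; B].
Definition S3F (x : M3) : Prop :=
  exists2 n, Ngrp n & [\/ x = n, x = n * H3 | x = n * H3 ^+ 2].

Definition conjset (V : M3) (P : M3 -> Prop) (x : M3) : Prop :=
  exists2 s, P s & x = V * s * V^-1.

Definition same_set (P Q : M3 -> Prop) : Prop := forall x, P x <-> Q x.

Definition has_card (P : M3 -> Prop) (n : nat) : Prop :=
  exists s : seq M3, [/\ uniq s, size s = n & forall x, P x <-> x \in s].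

Definition is_subgroup_of (G H : M3 -> Prop) : Prop :=
  [/\ forall x, H x -> G x, H 1,
      forall x y, H x -> H y -> H (x * y) & forall x, H x -> H x^-1].

Definition is_Sylow (p : nat) (G H : M3 -> Prop) : Prop :=
  is_subgroup_of G H /\
  exists nG nH, [/\ has_card G nG, has_card H nH & nH = (nG`_p)%N].

Definition four_sylows (i : 'I_4) : M3 -> Prop :=
  match val i with
  | 0 => S3F
  | 1 => conjset V2 S3F
  | 2 => conjset V3 S3F
  | _ => conjset V4 S3F
  end.

From Pilot Require Import Defs.
From Stdlib Require Import ZArith.
From HB Require Import structures.
From mathcomp Require Import all_boot all_order all_algebra all_field.
From mathcomp Require Import all_fingroup all_solvable.
From mathcomp Require Import ssrZ ring.
Set Implicit Arguments. Unset Strict Implicit. Unset Printing Implicit Defensive.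

(* Every matrix involved has entries in Z[zeta, sqrt 2][1/2], where zeta = e^{i pi/9}
   is a root of Phi_18 = X^6 - X^3 + 1.  Computing exactly in that ring, a breadth-first
   search lists the 648 elements of Fr(162 x 4); different codes have different values,
   which is certified by checking that the norm of each difference of entries is a
   nonzero rational.  S_3(F) is then a subgroup of order 81 = 648_3, so it and its
   conjugates by V2, V3, V4 are Sylow 3-subgroups, and the lists show these four are
   pairwise distinct.  The number of Sylow 3-subgroups divides 648 and is 1 mod 3, hence
   is 1 or 4, so there are no others. *)

(** * Exact arithmetic in Z[zeta, sqrt 2][1/2] *)

Section ExactArithmetic.
Local Open Scope Z_scope.

(* [(a0, ..., a5)] stands for [a0 + a1 X + ... + a5 X^5] in [Z[X]/(X^6 - X^3 + 1)],
   the 18th cyclotomic ring, and [(a, b, k) : dnum] for [(a + b sqrt 2) / 2^k]. *)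
Definition cyc := (Z * Z * Z * Z * Z * Z)%type.
Definition dnum := (cyc * cyc * nat)%type.

Definition cyc_add (a b : cyc) : cyc :=
  let: (a0,a1,a2,a3,a4,a5) := a in let: (b0,b1,b2,b3,b4,b5) := b in
  (a0+b0,a1+b1,a2+b2,a3+b3,a4+b4,a5+b5).
Definition cyc_scale (n : Z) (a : cyc) : cyc :=
  let: (a0,a1,a2,a3,a4,a5) := a in (n*a0,n*a1,n*a2,n*a3,n*a4,n*a5).
(* Reduction of the degree-10 product uses [X^6 = X^3 - 1], [X^9 = -1], [X^10 = -X]. *)
Definition cyc_mul (a b : cyc) : cyc :=
  let: (a0,a1,a2,a3,a4,a5) := a in let: (b0,b1,b2,b3,b4,b5) := b in
  let c0 := a0*b0 in
  let c1 := a0*b1 + a1*b0 in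
  let c2 := a0*b2 + a1*b1 + a2*b0 in
  let c3 := a0*b3 + a1*b2 + a2*b1 + a3*b0 in
  let c4 := a0*b4 + a1*b3 + a2*b2 + a3*b1 + a4*b0 in
  let c5 := a0*b5 + a1*b4 + a2*b3 + a3*b2 + a4*b1 + a5*b0 in
  let c6 := a1*b5 + a2*b4 + a3*b3 + a4*b2 + a5*b1 in
  let c7 := a2*b5 + a3*b4 + a4*b3 + a5*b2 in
  let c8 := a3*b5 + a4*b4 + a5*b3 in
  let c9 := a4*b5 + a5*b4 in
  let c10 := a5*b5 in
  (c0 - c6 - c9, c1 - c7 - c10, c2 - c8, c3 + c6, c4 + c7, c5 + c8).
Definition cyc_even (a : cyc) : bool :=
  let: (a0,a1,a2,a3,a4,a5) := a in
  [&& Z.even a0, Z.even a1, Z.even a2, Z.even a3, Z.even a4 & Z.even a5].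
Definition cyc_half (a : cyc) : cyc :=
  let: (a0,a1,a2,a3,a4,a5) := a in
  (Z.div2 a0,Z.div2 a1,Z.div2 a2,Z.div2 a3,Z.div2 a4,Z.div2 a5).
Definition cyc_eqb (a b : cyc) : bool :=
  let: (a0,a1,a2,a3,a4,a5) := a in let: (b0,b1,b2,b3,b4,b5) := b in
  [&& Z.eqb a0 b0, Z.eqb a1 b1, Z.eqb a2 b2, Z.eqb a3 b3, Z.eqb a4 b4 & Z.eqb a5 b5].
Definition cyc0 : cyc := (0,0,0,0,0,0).
Definition cyc1 : cyc := (1,0,0,0,0,0).
Definition cyc_X : cyc := (0,1,0,0,0,0).
Definition cyc_Xn (n : nat) : cyc := iter n (cyc_mul cyc_X) cyc1.

Fixpoint dnum_normrec (f : nat) (a b : cyc) (k : nat) : dnum :=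
  match f, k with
  | S f', S k' => if cyc_even a && cyc_even b
                  then dnum_normrec f' (cyc_half a) (cyc_half b) k' else (a,b,k)
  | _, _ => (a,b,k)
  end.
Definition dnum_norm (x : dnum) : dnum := let: (a,b,k) := x in dnum_normrec k a b k.
Definition pow2 (k : nat) : Z := Z.pow 2 (Z.of_nat k).
Definition dnum_add (x y : dnum) : dnum :=
  let: (a,b,k) := x in let: (a',b',k') := y in
  dnum_norm (cyc_add (cyc_scale (pow2 k') a) (cyc_scale (pow2 k) a'),
             cyc_add (cyc_scale (pow2 k') b) (cyc_scale (pow2 k) b'), (k + k')%N).
Definition dnum_mul (x y : dnum) : dnum :=
  let: (a,b,k) := x in let: (a',b',k') := y in
  dnum_norm (cyc_add (cyc_mul a a') (cyc_scale 2 (cyc_mul b b')),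
             cyc_add (cyc_mul a b') (cyc_mul b a'), (k + k')%N).
Definition dnum_opp (x : dnum) : dnum :=
  let: (a,b,k) := x in (cyc_scale (-1) a, cyc_scale (-1) b, k).
Definition dnum_sub (x y : dnum) : dnum := dnum_add x (dnum_opp y).
Definition dnum_eqb (x y : dnum) : bool :=
  let: (a,b,k) := x in let: (a',b',k') := y in
  [&& cyc_eqb a a', cyc_eqb b b' & Nat.eqb k k'].
Definition dnum0 : dnum := (cyc0, cyc0, 0%N).
Definition dnum1 : dnum := (cyc1, cyc0, 0%N).
Fixpoint dnum_mem (x : dnum) (l : seq dnum) : bool :=
  if l is y :: l' then dnum_eqb x y || dnum_mem x l' else false.
Fixpoint dnum_undup (l acc : seq dnum) : seq dnum :=
  if l is x :: l' then dnum_undup l' (if dnum_mem x acc then acc else x :: acc)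
  else acc.

Definition cyc_Xn_table : seq cyc := Eval vm_compute in [seq cyc_Xn i | i <- iota 0 18].
Definition cyc_Xn_mod (n : nat) : cyc := nth cyc0 cyc_Xn_table (n %% 18).
Definition cyc_subst (j : nat) (a : cyc) : cyc :=
  let: (a0,a1,a2,a3,a4,a5) := a in
  cyc_add (cyc_scale a0 cyc1) (cyc_add (cyc_scale a1 (cyc_Xn_mod j))
    (cyc_add (cyc_scale a2 (cyc_Xn_mod (2*j))) (cyc_add (cyc_scale a3 (cyc_Xn_mod (3*j)))
    (cyc_add (cyc_scale a4 (cyc_Xn_mod (4*j))) (cyc_scale a5 (cyc_Xn_mod (5*j))))))).
Definition dnum_conj (j : nat) (s : Z) (x : dnum) : dnum :=
  let: (a,b,k) := x in (cyc_subst j a, cyc_scale s (cyc_subst j b), k).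
(* The conjugates [zeta |-> zeta^j, sqrt 2 |-> s sqrt 2] for [j] a unit mod 18 and
   [s = 1, -1], except the identity. *)
Definition conjugations : seq (nat * Z) :=
  [:: (1%N,-1); (5%N,1); (5%N,-1); (7%N,1); (7%N,-1); (11%N,1); (11%N,-1);
      (13%N,1); (13%N,-1); (17%N,1); (17%N,-1)].
Definition dnum_coconj (x : dnum) : dnum :=
  foldr (fun js acc => dnum_mul (dnum_conj js.1 js.2 x) acc) dnum1 conjugations.
Definition dnum_nonzero_rat (x : dnum) : bool :=
  let: (a,b,k) := x in let: (a0,a1,a2,a3,a4,a5) := a in
  [&& ~~ Z.eqb a0 0, Z.eqb a1 0, Z.eqb a2 0, Z.eqb a3 0, Z.eqb a4 0, Z.eqb a5 0
    & cyc_eqb b cyc0].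
(* No Galois theory is needed: [x * dnum_coconj x] is just checked to be a nonzero
   rational, which forces [x <> 0]. *)
Definition dnum_nonzero_cert (x : dnum) : bool :=
  dnum_nonzero_rat (dnum_mul x (dnum_coconj x)).
Fixpoint pairwise_distinct_cert (l : seq dnum) : bool :=
  if l is v :: l' then
    all (fun w => dnum_nonzero_cert (dnum_sub v w)) l' && pairwise_distinct_cert l'
  else true.

Definition dmx := (dnum * dnum * dnum * dnum * dnum * dnum * dnum * dnum * dnum)%type.
Definition dmx_entries (X : dmx) : seq dnum :=
  let: (x11,x12,x13,x21,x22,x23,x31,x32,x33) := X in
  [:: x11; x12; x13; x21; x22; x23; x31; x32; x33].
Definition dmx_mul (X Y : dmx) : dmx :=
  let: (x11,x12,x13,x21,x22,x23,x31,x32,x33) := X in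
  let: (y11,y12,y13,y21,y22,y23,y31,y32,y33) := Y in
  let e a b c d e f :=
    dnum_add (dnum_add (dnum_add dnum0 (dnum_mul a b)) (dnum_mul c d)) (dnum_mul e f) in
  (e x11 y11 x12 y21 x13 y31, e x11 y12 x12 y22 x13 y32, e x11 y13 x12 y23 x13 y33,
   e x21 y11 x22 y21 x23 y31, e x21 y12 x22 y22 x23 y32, e x21 y13 x22 y23 x23 y33,
   e x31 y11 x32 y21 x33 y31, e x31 y12 x32 y22 x33 y32, e x31 y13 x32 y23 x33 y33).
Definition dmx1 : dmx :=
  (dnum1,dnum0,dnum0, dnum0,dnum1,dnum0, dnum0,dnum0,dnum1).
Definition dmx_eqb (X Y : dmx) : bool :=
  let: (x11,x12,x13,x21,x22,x23,x31,x32,x33) := X in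
  let: (y11,y12,y13,y21,y22,y23,y31,y32,y33) := Y in
  [&& dnum_eqb x11 y11, dnum_eqb x12 y12, dnum_eqb x13 y13, dnum_eqb x21 y21,
      dnum_eqb x22 y22, dnum_eqb x23 y23, dnum_eqb x31 y31, dnum_eqb x32 y32
    & dnum_eqb x33 y33].
Fixpoint dmx_mem (x : dmx) (l : seq dmx) : bool :=
  if l is y :: l' then dmx_eqb x y || dmx_mem x l' else false.
Fixpoint dmx_uniq (l : seq dmx) : bool :=
  if l is x :: l' then ~~ dmx_mem x l' && dmx_uniq l' else true.
Definition dmx_find_inv (X : dmx) (l : seq dmx) : dmx :=
  head dmx1 [seq Y <- l | dmx_eqb (dmx_mul X Y) dmx1].

(* Hash buckets, to make membership tests in a group of order 648 affordable. *)
Definition dnum_hash (x : dnum) : Z :=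
  let: (a,b,k) := x in
  let: (a0,a1,a2,a3,a4,a5) := a in let: (b0,b1,b2,b3,b4,b5) := b in
  a0 + 3*a1 + 7*a2 + 13*a3 + 29*a4 + 53*a5 + 97*b0 + 193*b1 + 389*b2 + 769*b3
  + 1543*b4 + 3079*b5 + 6151 * Z.of_nat k.
Definition nbuckets : nat := 251%N.
Definition dmx_key (X : dmx) : nat :=
  let: (x11,x12,x13,x21,x22,x23,x31,x32,x33) := X in
  Z.to_nat (Z.modulo (dnum_hash x11 + 31 * dnum_hash x12 + 37 * dnum_hash x13
     + 41 * dnum_hash x21 + 43 * dnum_hash x22 + 47 * dnum_hash x23
     + 59 * dnum_hash x31 + 61 * dnum_hash x32 + 67 * dnum_hash x33)
     (Z.of_nat nbuckets)).
Definition bucket_add (x : dmx) (B : seq (seq dmx)) : seq (seq dmx) :=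
  set_nth [::] B (dmx_key x) (x :: nth [::] B (dmx_key x)).
Definition buckets (l : seq dmx) : seq (seq dmx) :=
  foldr bucket_add (nseq nbuckets [::]) l.
Definition bucket_mem (x : dmx) (B : seq (seq dmx)) : bool :=
  dmx_mem x (nth [::] B (dmx_key x)).

(* Breadth-first enumeration of the products of generators; the state is
   (elements found, their buckets, last frontier). *)
Fixpoint bfs_insert (c acc : seq dmx) (B : seq (seq dmx)) (new : seq dmx) :=
  if c is x :: c' then
    if bucket_mem x B then bfs_insert c' acc B new
    else bfs_insert c' (x :: acc) (bucket_add x B) (x :: new)
  else (acc, B, new).
Definition bfs_step (gs : seq dmx) (st : seq dmx * seq (seq dmx) * seq dmx) :=
  let: (acc, B, fr) := st in bfs_insert [seq dmx_mul g x | g <- gs, x <- fr] acc B [::].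
Definition bfs (gs : seq dmx) (n : nat) : seq dmx :=
  (iter n (bfs_step gs) ([:: dmx1], buckets [:: dmx1], [:: dmx1])).1.1.

End ExactArithmetic.

Import Order.TTheory GRing.Theory Num.Theory.
Local Open Scope ring_scope.

Definition intC (n : Z) : algC := (int_of_Z n)%:~R.

Lemma intC_add a b : intC (Z.add a b) = intC a + intC b.
Proof. by rewrite /intC (raddfD int_of_Z a b) intrD. Qed.
Lemma intC_mul a b : intC (Z.mul a b) = intC a * intC b.
Proof. by rewrite /intC (rmorphM int_of_Z a b) intrM. Qed.
Lemma intC_opp a : intC (Z.opp a) = - intC a.
Proof. by rewrite /intC (raddfN int_of_Z a) intrN. Qed.
Lemma intC_sub a b : intC (Z.sub a b) = intC a - intC b.
Proof. by rewrite -Z.add_opp_r intC_add intC_opp. Qed.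
Lemma intC_pow2 k : intC (pow2 k) = 2 ^+ k.
Proof.
rewrite /pow2; elim: k => [|k IH]; first by rewrite expr0.
rewrite Nat2Z.inj_succ Z.pow_succ_r; last exact: Zle_0_nat.
by rewrite intC_mul IH exprS.
Qed.
Lemma intC_div2 n : Z.even n -> intC n = 2 * intC (Z.div2 n).
Proof.
by move=> ev; rewrite {1}(Z.div2_odd n) -Z.negb_even ev Z.add_0_r intC_mul.
Qed.
Lemma intC_eq0 n : (intC n == 0) = Z.eqb n 0.
Proof.
rewrite /intC intr_eq0; apply/eqP/Z.eqb_spec => [h|->] //.
by rewrite -(int_of_ZK n) h.
Qed.

Section Evaluation.
Variable r : algC.
Hypothesis r_Phi18 : r ^+ 6 = r ^+ 3 - 1.

Definition cyc_eval (a : cyc) : algC :=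
  let: (a0,a1,a2,a3,a4,a5) := a in
  intC a0 + intC a1 * r + intC a2 * r ^+ 2 + intC a3 * r ^+ 3 + intC a4 * r ^+ 4
  + intC a5 * r ^+ 5.

Lemma cyc_eval_add a b : cyc_eval (cyc_add a b) = cyc_eval a + cyc_eval b.
Proof.
case: a => [[[[[a0 a1] a2] a3] a4] a5]; case: b => [[[[[b0 b1] b2] b3] b4] b5].
rewrite /= !intC_add; ring.
Qed.

Lemma cyc_eval_scale n a : cyc_eval (cyc_scale n a) = intC n * cyc_eval a.
Proof. case: a => [[[[[a0 a1] a2] a3] a4] a5]; rewrite /= !intC_mul; ring. Qed.

Lemma cyc_eval_mul a b : cyc_eval (cyc_mul a b) = cyc_eval a * cyc_eval b.
Proof.
have Phi18_r : r ^+ 6 - r ^+ 3 + 1 = 0 by rewrite r_Phi18; ring.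
case: a => [[[[[a0 a1] a2] a3] a4] a5]; case: b => [[[[[b0 b1] b2] b3] b4] b5].
rewrite /cyc_mul /cyc_eval !(intC_add, intC_sub, intC_mul).
set A0 := intC a0; set A1 := intC a1; set A2 := intC a2; set A3 := intC a3;
set A4 := intC a4; set A5 := intC a5.
set B0 := intC b0; set B1 := intC b1; set B2 := intC b2; set B3 := intC b3;
set B4 := intC b4; set B5 := intC b5.
set c6 := A1*B5 + A2*B4 + A3*B3 + A4*B2 + A5*B1.
set c7 := A2*B5 + A3*B4 + A4*B3 + A5*B2.
set c8 := A3*B5 + A4*B4 + A5*B3.
set c9 := A4*B5 + A5*B4.
set c10 := A5*B5.
(* the product and its reduction differ by this quotient times [Phi18 r] *)
rewrite -[LHS]addr0 -(mul0r (c6 + c7 * r + c8 * r ^+ 2 + c9 * (r ^+ 3 + 1)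
   + c10 * r * (r ^+ 3 + 1))) -Phi18_r /c6 /c7 /c8 /c9 /c10.
ring.
Qed.

Lemma cyc_eval_half a : cyc_even a -> cyc_eval a = 2 * cyc_eval (cyc_half a).
Proof.
case: a => [[[[[a0 a1] a2] a3] a4] a5] /= /andP[e0 /andP[e1 /andP[e2 /andP[e3 /andP[e4 e5]]]]].
rewrite (intC_div2 e0) (intC_div2 e1) (intC_div2 e2) (intC_div2 e3) (intC_div2 e4)
  (intC_div2 e5); ring.
Qed.

Lemma cyc_eval0 : cyc_eval cyc0 = 0.
Proof. by rewrite /=; ring. Qed.
Lemma cyc_eval1 : cyc_eval cyc1 = 1.
Proof. by rewrite /=; ring. Qed.
Lemma cyc_eval_Xn n : cyc_eval (cyc_Xn n) = r ^+ n.
Proof.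
elim: n => [|n IH]; first exact: cyc_eval1.
rewrite /cyc_Xn iterS -/(cyc_Xn n) cyc_eval_mul IH exprS; congr (_ * _).
by rewrite /=; ring.
Qed.

Variable s : algC.
Hypothesis s_sqr : s ^+ 2 = 2.

Definition dnum_eval (x : dnum) : algC :=
  let: (a,b,k) := x in (cyc_eval a + cyc_eval b * s) / 2 ^+ k.

Lemma exp2_neq0 k : (2 : algC) ^+ k != 0.
Proof. by rewrite expf_neq0 // pnatr_eq0. Qed.

Lemma dnum_eval_norm x : dnum_eval (dnum_norm x) = dnum_eval x.
Proof.
suff normrec f a b k : dnum_eval (dnum_normrec f a b k) = dnum_eval (a, b, k).
  by case: x => [[a b] k]; apply: normrec.
elim: f a b k => [|f IH] a b [|k] //=.
case: ifP => // /andP[ea eb]; rewrite IH /=.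
rewrite [cyc_eval a](cyc_eval_half ea) [cyc_eval b](cyc_eval_half eb) exprS.
by field; rewrite exp2_neq0.
Qed.

Lemma dnum_eval_add x y : dnum_eval (dnum_add x y) = dnum_eval x + dnum_eval y.
Proof.
case: x => [[a b] k]; case: y => [[a' b'] k']; rewrite /dnum_add dnum_eval_norm /=.
rewrite !cyc_eval_add !cyc_eval_scale !intC_pow2 exprD.
by field; rewrite !exp2_neq0.
Qed.

Lemma dnum_eval_mul x y : dnum_eval (dnum_mul x y) = dnum_eval x * dnum_eval y.
Proof.
case: x => [[a b] k]; case: y => [[a' b'] k']; rewrite /dnum_mul dnum_eval_norm /=.
rewrite !cyc_eval_add !cyc_eval_scale !cyc_eval_mul exprD.
have -> : intC 2 = s ^+ 2 by rewrite s_sqr.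
by field; rewrite !exp2_neq0.
Qed.

Lemma dnum_eval_opp x : dnum_eval (dnum_opp x) = - dnum_eval x.
Proof. by case: x => [[a b] k]; rewrite /= !cyc_eval_scale; ring. Qed.

Lemma dnum_eval_sub x y : dnum_eval (dnum_sub x y) = dnum_eval x - dnum_eval y.
Proof. by rewrite /dnum_sub dnum_eval_add dnum_eval_opp. Qed.

Lemma dnum_eval0 : dnum_eval dnum0 = 0.
Proof. by rewrite /=; field. Qed.
Lemma dnum_eval1 : dnum_eval dnum1 = 1.
Proof. by rewrite /=; field. Qed.

End Evaluation.

(** * zeta is a root of Phi_18 *)

Lemma Phi18_root_of_9th_root (y : algC) :
  y ^+ 9 = -1 -> y ^+ 3 != -1 -> y ^+ 6 = y ^+ 3 - 1.
Proof.
move=> y9 y3.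
have : (y ^+ 3 + 1) * (y ^+ 6 - y ^+ 3 + 1) = 0.
  have -> : (y ^+ 3 + 1) * (y ^+ 6 - y ^+ 3 + 1) = y ^+ 9 + 1 by ring.
  by rewrite y9 addNr.
move/eqP; rewrite mulf_eq0 => /orP[|/eqP h].
  by rewrite addr_eq0 (negbTE y3).
by apply/eqP; rewrite -subr_eq0 -h; apply/eqP; ring.
Qed.

Lemma conj_norm1 (c : algC) : `|c| = 1 -> c^* = c^-1.
Proof. by move=> nc; rewrite invC_norm nc expr1n invr1 mul1r. Qed.

Lemma prim18_9 (y : algC) : 18.-primitive_root y -> y ^+ 9 = -1.
Proof.
move=> py; have : (y ^+ 9) ^+ 2 == 1 by rewrite -exprM (prim_expr_order py).
by rewrite sqrf_eq1 -(prim_order_dvd py) => /eqP.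
Qed.

Definition one_sub_trace (k : nat) : cyc :=
  cyc_add cyc1 (cyc_scale (Zneg xH) (cyc_add (cyc_Xn k) (cyc_Xn (18 - k)))).

(* At a primitive 18th root [y], [one_sub_trace k] is [1 - (y^k + y^-k)] = [1 - 2 cos (k pi/9)];
   for [k = 1, 5, 7] these multiply to [-3], so they cannot all be nonnegative. *)
Lemma one_sub_trace_prod :
  cyc_mul (one_sub_trace 1) (cyc_mul (one_sub_trace 5) (one_sub_trace 7))
  = (Zneg 3, Z0, Z0, Z0, Z0, Z0).
Proof. by vm_compute. Qed.

Lemma prim18_trace_gt1 (y : algC) : 18.-primitive_root y ->
  exists2 k, odd k & 1 < y ^+ k + (y ^+ k)^*.
Proof.
move=> py; have y18 : y ^+ 18 = 1 := prim_expr_order py.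
have y9 := prim18_9 py.
have y3 : y ^+ 3 != -1.
  apply/eqP => h; have : y ^+ 6 == 1 by rewrite (exprM y 3 2) h sqrrN expr1n.
  by rewrite -(prim_order_dvd py).
have y_Phi18 := Phi18_root_of_9th_root y9 y3.
have ny : `|y| = 1.
  have : `|y| ^+ 18 == 1 by rewrite -normrX y18 normr1.
  by rewrite pexpr_eq1 // => /eqP.
have eval_trace k : (k <= 18)%N ->
    cyc_eval y (one_sub_trace k) = 1 - (y ^+ k + (y ^+ k)^*).
  move=> hk; rewrite /one_sub_trace cyc_eval_add cyc_eval_scale cyc_eval_add.
  rewrite !cyc_eval_Xn // cyc_eval1 conj_norm1; last by rewrite normrX ny expr1n.
  by rewrite (@mulr1_eq _ _ (y ^+ (18 - k))) ?mulN1r // -exprD subnKC.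
have real_trace k : y ^+ k + (y ^+ k)^* \is Num.real.
  have -> : y ^+ k + (y ^+ k)^* = 'Re (y ^+ k) * 2 by rewrite ReE mulfVK ?pnatr_eq0.
  by rewrite rpredM ?Creal_Re ?realn.
have prod3 : (1 - (y ^+ 1 + (y ^+ 1)^*)) *
    ((1 - (y ^+ 5 + (y ^+ 5)^*)) * (1 - (y ^+ 7 + (y ^+ 7)^*))) = -3.
  rewrite -!eval_trace // -!(cyc_eval_mul y_Phi18) one_sub_trace_prod /=.
  by rewrite /intC /=; ring.
have [h1|n1] := boolP (1 < y ^+ 1 + (y ^+ 1)^*); first by exists 1%N.
have [h5|n5] := boolP (1 < y ^+ 5 + (y ^+ 5)^*); first by exists 5%N.
have [h7|n7] := boolP (1 < y ^+ 7 + (y ^+ 7)^*); first by exists 7%N.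
have nonneg k : ~~ (1 < y ^+ k + (y ^+ k)^*) -> 0 <= 1 - (y ^+ k + (y ^+ k)^*).
  by rewrite real_ltNge ?real1 ?real_trace // negbK subr_ge0.
have := mulr_ge0 (nonneg _ n1) (mulr_ge0 (nonneg _ n5) (nonneg _ n7)).
by rewrite prod3 oppr_ge0 lern0.
Qed.

Lemma ninth_root_of_m1_in_first_sextant :
  exists2 w : algC, w ^+ 9 = -1 & (0 <= 'Im w) && (1 < w + w^*).
Proof.
have [y py] := C_prim_root_exists (isT : (0 < 18)%N).
have [k kodd hk] := prim18_trace_gt1 py.
have yk9 : (y ^+ k) ^+ 9 = -1.
  by rewrite -exprM mulnC exprM (prim18_9 py) -signr_odd kodd.
have [him|him] := boolP (0 <= 'Im (y ^+ k)).
  by exists (y ^+ k) => //; rewrite him hk.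
exists (y ^+ k)^*; first by rewrite -rmorphXn yk9 rmorphN1.
rewrite conjCK addrC hk andbT Im_conj oppr_ge0.
by have := real_leVge (Creal_Im (y ^+ k)) (real0 _); rewrite (negbTE him) orbF.
Qed.

Lemma zeta9 : zeta ^+ 9 = -1.
Proof. exact: (@rootCK _ 9 isT (-1)). Qed.

(* [zeta] has maximal real part among the ninth roots of [-1], while the cube roots of
   [-1] have real part at most [1/2]. *)
Lemma zeta3_neq_m1 : zeta ^+ 3 != -1.
Proof.
have [w w9 /andP[imw hw]] := ninth_root_of_m1_in_first_sextant.
have hz : 1 < zeta + zeta^*.
  apply: (lt_le_trans hw); move: (@rootC_Re_max _ 9 (-1) w isT w9 imw).
  by rewrite !ReE ler_pM2r // invr_gt0 ltr0n.
apply/negP => /eqP z3.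
have nz : `|zeta| = 1.
  have : `|zeta| ^+ 9 == 1 by rewrite -normrX zeta9 normrN1.
  by rewrite pexpr_eq1 // => /eqP.
have z0 : zeta != 0 by rewrite -normr_eq0 nz oner_eq0.
have : (zeta + 1) * (zeta ^+ 2 - zeta + 1) = 0.
  have -> : (zeta + 1) * (zeta ^+ 2 - zeta + 1) = zeta ^+ 3 + 1 by ring.
  by rewrite z3 addNr.
move/eqP; rewrite mulf_eq0 => /orP[|/eqP z2].
  rewrite addr_eq0 => /eqP zm1; move: hz; rewrite zm1 rmorphN1 -opprD.
  move=> /(lt_trans ltr01); rewrite oppr_gt0 => /(lt_trans (addr_gt0 ltr01 ltr01)).
  by rewrite ltxx.
suff : zeta + zeta^* = 1 by move=> e; rewrite e ltxx in hz.
rewrite conj_norm1 //; apply: (mulfI z0); rewrite mulrDr mulfV // mulr1.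
by apply/eqP; rewrite -subr_eq0 -z2; apply/eqP; ring.
Qed.

Lemma zeta_Phi18 : zeta ^+ 6 = zeta ^+ 3 - 1.
Proof. exact: Phi18_root_of_9th_root zeta9 zeta3_neq_m1. Qed.

Definition dnumC (x : dnum) : algC := dnum_eval zeta (sqrtC 2) x.

Lemma dnumC_add x y : dnumC (dnum_add x y) = dnumC x + dnumC y.
Proof. exact: dnum_eval_add. Qed.
Lemma dnumC_mul x y : dnumC (dnum_mul x y) = dnumC x * dnumC y.
Proof. exact: (dnum_eval_mul zeta_Phi18 (sqrtCK 2)). Qed.
Lemma dnumC_opp x : dnumC (dnum_opp x) = - dnumC x.
Proof. exact: dnum_eval_opp. Qed.
Lemma dnumC_sub x y : dnumC (dnum_sub x y) = dnumC x - dnumC y.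
Proof. exact: dnum_eval_sub. Qed.
Lemma dnumC0 : dnumC dnum0 = 0. Proof. exact: dnum_eval0. Qed.
Lemma dnumC1 : dnumC dnum1 = 1. Proof. exact: dnum_eval1. Qed.
Lemma dnumCE a b k :
  dnumC (a, b, k) = (cyc_eval zeta a + cyc_eval zeta b * sqrtC 2) / 2 ^+ k.
Proof. by []. Qed.

Arguments dnum_add : simpl never.
Arguments dnum_mul : simpl never.
Arguments dnum_opp : simpl never.
Arguments dnumC : simpl never.
Arguments cyc_Xn : simpl never.

Definition dmxC (X : dmx) : M3 :=
  let: (x11,x12,x13,x21,x22,x23,x31,x32,x33) := X in
  mx3 (dnumC x11) (dnumC x12) (dnumC x13) (dnumC x21) (dnumC x22) (dnumC x23)
      (dnumC x31) (dnumC x32) (dnumC x33).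
Arguments dmxC : simpl never.

Lemma dmxC_mul X Y : dmxC (dmx_mul X Y) = dmxC X * dmxC Y.
Proof.
case: X => [[[[[[[[x11 x12] x13] x21] x22] x23] x31] x32] x33].
case: Y => [[[[[[[[y11 y12] y13] y21] y22] y23] y31] y32] y33].
apply/matrixP => i j; rewrite -mulmxE !mxE !big_ord_recl big_ord0 !mxE.
case: i => [[|[|[|i]]] Hi] //; case: j => [[|[|[|j]]] Hj] //=;
  rewrite !dnumC_add !dnumC_mul dnumC0; ring.
Qed.

Lemma dmxC1 : dmxC dmx1 = 1.
Proof.
apply/matrixP => i j; rewrite !mxE.
by case: i => [[|[|[|i]]] Hi] //; case: j => [[|[|[|j]]] Hj] //=; rewrite ?dnumC0 ?dnumC1.
Qed.

Lemma dmxC_unit X Y : dmx_mul X Y = dmx1 -> dmxC X \is a GRing.unit.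
Proof.
move=> XY; have XYC : dmxC X *m dmxC Y = 1%:M by rewrite mulmxE -dmxC_mul XY dmxC1.
by have [] := mulmx1_unit XYC.
Qed.

Lemma dmxC_inv X Y : dmx_mul X Y = dmx1 -> (dmxC X)^-1 = dmxC Y.
Proof.
move=> XY; rewrite -[dmxC Y]mul1r -(mulVr (dmxC_unit XY)) -mulrA -dmxC_mul XY.
by rewrite dmxC1 mulr1.
Qed.

Definition zeta_pow_code (n : nat) : dnum := (cyc_Xn n, cyc0, 0%N).
Definition half_e4_code : dnum := (cyc_Xn 4, cyc0, 1%N).
Definition isq2_e7_code : dnum := (cyc0, cyc_Xn 7, 1%N).
Definition half_code : dnum := (cyc1, cyc0, 1%N).
Definition isq2_code : dnum := (cyc0, cyc1, 1%N).

Definition G1_code : dmx :=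
  (zeta_pow_code 7, dnum0, dnum0,
   dnum0, dnum_opp (zeta_pow_code 4), dnum0,
   dnum0, dnum0, dnum_opp (zeta_pow_code 7)).
Definition G2_code : dmx :=
  (dnum_opp half_e4_code, isq2_e7_code, half_e4_code,
   isq2_e7_code, dnum0, isq2_e7_code,
   half_e4_code, isq2_e7_code, dnum_opp half_e4_code).
Definition FUM_code : dmx :=
  (dnum0, dnum0, dnum_opp (zeta_pow_code 6),
   dnum0, dnum_opp (zeta_pow_code 6), dnum0,
   dnum_opp (zeta_pow_code 6), dnum0, dnum0).
Definition H3_code : dmx :=
  (half_code, isq2_code, dnum_opp half_code,
   isq2_code, dnum0, isq2_code,
   half_code, dnum_opp isq2_code, dnum_opp half_code).

Lemma isq2E : isq2 = sqrtC 2 / 2.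
Proof.
rewrite /isq2; apply: mulr1_eq.
by rewrite mulrA -expr2 sqrtCK mulfV // pnatr_eq0.
Qed.

Lemma dnumC_zeta_pow n : dnumC (zeta_pow_code n) = zeta ^+ n.
Proof. by rewrite dnumCE (cyc_eval_Xn zeta_Phi18) cyc_eval0 mul0r addr0 divr1. Qed.
Lemma dnumC_half_e4 : dnumC half_e4_code = Defs.half * e4.
Proof. by rewrite dnumCE (cyc_eval_Xn zeta_Phi18) cyc_eval0 mul0r addr0 mulrC. Qed.
Lemma dnumC_isq2_e7 : dnumC isq2_e7_code = isq2 * e7.
Proof. by rewrite dnumCE (cyc_eval_Xn zeta_Phi18) cyc_eval0 add0r isq2E /e7; ring. Qed.
Lemma dnumC_half : dnumC half_code = Defs.half.
Proof. by rewrite dnumCE cyc_eval1 cyc_eval0 mul0r addr0 mul1r. Qed.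
Lemma dnumC_isq2 : dnumC isq2_code = isq2.
Proof. by rewrite dnumCE cyc_eval1 cyc_eval0 add0r mul1r isq2E. Qed.

Lemma dmxC_G1 : dmxC G1_code = G1.
Proof. by rewrite /dmxC /G1_code dnumC0 !dnumC_opp !dnumC_zeta_pow. Qed.
Lemma dmxC_G2 : dmxC G2_code = G2.
Proof. by rewrite /dmxC /G2_code dnumC0 !dnumC_opp dnumC_half_e4 dnumC_isq2_e7. Qed.
Lemma dmxC_H3 : dmxC H3_code = H3.
Proof. by rewrite /dmxC /H3_code dnumC0 !dnumC_opp dnumC_half dnumC_isq2. Qed.
Lemma dmxC_FUM : dmxC FUM_code = FUM.
Proof.
rewrite /dmxC /FUM_code dnumC0 !dnumC_opp dnumC_zeta_pow /FUM /Jmx /omega.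
apply/matrixP => i j; rewrite !mxE.
by case: i => [[|[|[|i]]] Hi] //; case: j => [[|[|[|j]]] Hj] //=; ring.
Qed.

Lemma Zeqb_eqE (a b : Z) : Z.eqb a b = (a == b).
Proof. exact/Z.eqb_spec/eqP. Qed.

Lemma cyc_eqbE a b : cyc_eqb a b = (a == b).
Proof.
case: a => [[[[[a0 a1] a2] a3] a4] a5]; case: b => [[[[[b0 b1] b2] b3] b4] b5].
by rewrite /= !Zeqb_eqE !xpair_eqE !andbA.
Qed.

Lemma dnum_eqbE x y : dnum_eqb x y = (x == y).
Proof.
case: x => [[a b] k]; case: y => [[a' b'] k'].
by rewrite /= !cyc_eqbE !xpair_eqE andbA; congr (_ && _); apply/Nat.eqb_spec/eqP.
Qed.

Lemma dmx_eqbE X Y : dmx_eqb X Y = (X == Y).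
Proof.
case: X => [[[[[[[[x11 x12] x13] x21] x22] x23] x31] x32] x33].
case: Y => [[[[[[[[y11 y12] y13] y21] y22] y23] y31] y32] y33].
by rewrite /= !dnum_eqbE !xpair_eqE !andbA.
Qed.

Lemma dnum_memE x l : dnum_mem x l = (x \in l).
Proof. by elim: l => //= y l IH; rewrite in_cons dnum_eqbE IH. Qed.
Lemma dmx_memE x l : dmx_mem x l = (x \in l).
Proof. by elim: l => //= y l IH; rewrite in_cons dmx_eqbE IH. Qed.
Lemma dmx_uniqE l : dmx_uniq l = uniq l.
Proof. by elim: l => //= y l IH; rewrite dmx_memE IH. Qed.

Lemma bucket_mem_buckets x l : bucket_mem x (buckets l) -> x \in l.
Proof.
rewrite /bucket_mem dmx_memE; elim: l (dmx_key x) => [|y l IH] i /=.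
  by change (x \in nth [::] (nseq nbuckets [::]) i -> x \in [::]); rewrite nth_nseq; case: ifP.
rewrite /buckets /= -/(buckets l) /bucket_add nth_set_nth /=; case: eqP => [<-|_] /=.
  by rewrite !in_cons => /orP[->|/IH->]; rewrite ?orbT.
by move/IH; rewrite in_cons => ->; rewrite orbT.
Qed.

Lemma dnum_nonzero_rat_neq0 x : dnum_nonzero_rat x -> dnumC x != 0.
Proof.
case: x => [[[[[[[a0 a1] a2] a3] a4] a5] b] k] /=.
case/andP => nz0 /andP[/Z.eqb_spec-> /andP[/Z.eqb_spec-> /andP[/Z.eqb_spec->
  /andP[/Z.eqb_spec-> /andP[/Z.eqb_spec->]]]]].
rewrite cyc_eqbE => /eqP->; rewrite dnumCE.
have -> : cyc_eval zeta (a0, Z0, Z0, Z0, Z0, Z0) + cyc_eval zeta cyc0 * sqrtC 2 = intC a0.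
  by rewrite /=; ring.
by rewrite mulf_neq0 ?invr_eq0 ?exp2_neq0 ?intC_eq0.
Qed.

Lemma dnum_nonzero_cert_neq0 x : dnum_nonzero_cert x -> dnumC x != 0.
Proof. by move/dnum_nonzero_rat_neq0; rewrite dnumC_mul mulf_eq0 negb_or => /andP[]. Qed.

Lemma pairwise_distinct_certP l : pairwise_distinct_cert l ->
  {in l &, injective dnumC}.
Proof.
elim: l => //= u l IH /andP[hu hl] v w.
have neq z : z \in l -> dnumC u != dnumC z.
  by move=> zl; rewrite -subr_eq0 -dnumC_sub dnum_nonzero_cert_neq0 ?(allP hu).
rewrite !in_cons => /orP[/eqP->|vl] /orP[/eqP->|wl] // e.
- by have := neq w wl; rewrite e eqxx.
- by have := neq v vl; rewrite e eqxx.
- exact: IH.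
Qed.

Lemma dmxC_entry X (i j : 'I_3) : dmxC X i j = dnumC (nth dnum0 (dmx_entries X) (3 * i + j)).
Proof.
case: X => [[[[[[[[x11 x12] x13] x21] x22] x23] x31] x32] x33].
by rewrite /dmxC mxE; case: i => [[|[|[|i]]] Hi] //; case: j => [[|[|[|j]]] Hj].
Qed.

Lemma size_dmx_entries X : size (dmx_entries X) = 9%N.
Proof. by case: X => [[[[[[[[x11 x12] x13] x21] x22] x23] x31] x32] x33]. Qed.

Lemma dmx_entries_inj : injective dmx_entries.
Proof.
move=> [[[[[[[[x11 x12] x13] x21] x22] x23] x31] x32] x33].
move=> [[[[[[[[y11 y12] y13] y21] y22] y23] y31] y32] y33] /=.
by case=> -> -> -> -> -> -> -> -> ->.
Qed.

Lemma dmxC_inj vs : pairwise_distinct_cert vs ->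
  {in [pred X | all (mem vs) (dmx_entries X)] &, injective dmxC}.
Proof.
move=> cert X Y /allP hX /allP hY e; apply: dmx_entries_inj.
apply: (@eq_from_nth _ dnum0); first by rewrite !size_dmx_entries.
move=> n; rewrite size_dmx_entries => n9.
have i3 : (n %/ 3 < 3)%N by rewrite ltn_divLR.
have j3 : (n %% 3 < 3)%N by rewrite ltn_mod.
have := congr1 (fun M : M3 => M (Ordinal i3) (Ordinal j3)) e.
rewrite !dmxC_entry /= mulnC -divn_eq.
by apply: (pairwise_distinct_certP cert); [apply: hX | apply: hY];
  apply: mem_nth; rewrite size_dmx_entries.
Qed.

Lemma gen_mul S x y : gen S x -> gen S y -> gen S (x * y).
Proof.
elim=> [|g x' gS _ IH|g x' gS _ IH] hy; first by rewrite mul1r.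
- by rewrite -mulrA; apply: Defs.genM => //; apply: IH.
- by rewrite -mulrA; apply: Defs.genV => //; apply: IH.
Qed.

Lemma gen_unit_inv S x : {in S, forall g, g \is a GRing.unit} -> gen S x ->
  x \is a GRing.unit /\ gen S x^-1.
Proof.
move=> S_unit; elim=> [|g x' gS _ [xu IH]|g x' gS _ [xu IH]].
- by rewrite invr1; split; [exact: unitr1 | exact: Defs.gen1].
- have gu := S_unit g gS; split; first by rewrite unitrMl.
  rewrite invrM //; apply: gen_mul IH _.
  by rewrite -[g^-1]mulr1; apply: Defs.genV => //; exact: Defs.gen1.
- have gu := S_unit g gS; split; first by rewrite unitrMl // unitrV.
  rewrite invrM ?unitrV // invrK; apply: gen_mul IH _.
  by rewrite -[g]mulr1; apply: Defs.genM => //; exact: Defs.gen1.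
Qed.

Section ConjugateSubgroup.
Variable G : M3 -> Prop.
Hypothesis GM : forall x y, G x -> G y -> G (x * y).
Hypothesis GV : forall x, G x -> G x^-1.
Hypothesis G_unit : forall x, G x -> x \is a GRing.unit.

Lemma conjset_subgroup V P : G V -> is_subgroup_of G P -> is_subgroup_of G (conjset V P).
Proof.
move=> GVV [PG P1 PM PV]; have Vu := G_unit GVV.
split.
- by move=> x [s Ps ->]; apply: GM; [apply: GM => //; exact: PG | exact: GV].
- by exists 1 => //; rewrite mulr1 mulrV.
- move=> x y [s Ps ->] [t Pt ->]; exists (s * t); first exact: PM.
  by rewrite -!mulrA (mulrA V^-1) mulVr // mul1r.
- move=> x [s Ps ->]; exists s^-1; first exact: PV.
  have su := G_unit (PG s Ps).
  by rewrite invrM ?unitrMl ?unitrV // invrK invrM // mulrA.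
Qed.

End ConjugateSubgroup.

Section BreadthFirstSearch.
Variables (Q : dmx -> Prop) (gs : seq dmx).
Hypothesis Q1 : Q dmx1.
Hypothesis QM : forall g x, g \in gs -> Q x -> Q (dmx_mul g x).

Lemma bfs_insert_sound c acc B new : {in c, forall x, Q x} ->
  {in acc, forall x, Q x} -> {in new, forall x, Q x} ->
  {in (bfs_insert c acc B new).1.1, forall x, Q x} /\
  {in (bfs_insert c acc B new).2, forall x, Q x}.
Proof.
elim: c acc B new => [|x c IH] acc B new Qc Qacc Qnew /=; first by split.
have Qc' : {in c, forall x, Q x} by move=> y yc; apply: Qc; rewrite in_cons yc orbT.
have Qx : Q x by apply: Qc; rewrite mem_head.
case: ifP => _; first exact: IH.
by apply: IH => // y; rewrite in_cons => /orP[/eqP->//|]; [apply: Qacc | apply: Qnew].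
Qed.

Lemma bfs_sound n : {in bfs gs n, forall x, Q x}.
Proof.
rewrite /bfs; set st0 := (_, _, _).
suff [] : {in (iter n (bfs_step gs) st0).1.1, forall x, Q x} /\
          {in (iter n (bfs_step gs) st0).2, forall x, Q x} by [].
elim: n => [|n [IH1 IH2]]; first by split=> x; rewrite inE => /eqP->.
rewrite iterS; case: (iter n _ _) IH1 IH2 => [[acc B] fr] IH1 IH2.
apply: bfs_insert_sound => // x /allpairsP[[g y] /= [gin yin ->]].
by apply: QM => //; apply: IH2.
Qed.

End BreadthFirstSearch.

Lemma gen_enum gs invs n : dmx1 \in bfs gs n ->
  (forall x g, x \in bfs gs n -> g \in gs ++ invs -> dmx_mul g x \in bfs gs n) ->
  (forall g, g \in gs -> exists2 h, h \in invs & (dmxC g)^-1 = dmxC h) ->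
  forall y, gen (map dmxC gs) y <-> y \in map dmxC (bfs gs n).
Proof.
set L := bfs gs n; move=> L1 closedL invL y; split.
  elim=> [|g x gin _ /mapP[x' x'L ->]|g x gin _ /mapP[x' x'L ->]].
  - by apply/mapP; exists dmx1; rewrite ?dmxC1.
  - case/mapP: gin => g' g'in ->; apply/mapP; exists (dmx_mul g' x'); last by rewrite dmxC_mul.
    by apply: closedL => //; rewrite mem_cat g'in.
  - case/mapP: gin => g' g'in ->; have [h hin ->] := invL g' g'in.
    apply/mapP; exists (dmx_mul h x'); last by rewrite dmxC_mul.
    by apply: closedL => //; rewrite mem_cat hin orbT.
case/mapP => x xL ->; apply: (bfs_sound (Q := fun x => gen (map dmxC gs) (dmxC x))) xL.
  by rewrite dmxC1; exact: Defs.gen1.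
by move=> g z gin hz; rewrite dmxC_mul; apply: Defs.genM => //; apply: map_f.
Qed.

(** * The group Fr(162 x 4) *)

Definition Fr_gens : seq dmx := [:: G1_code; G2_code; FUM_code].
Definition Fr_codes : seq dmx := Eval vm_compute in bfs Fr_gens 11.
Lemma Fr_codesE : Fr_codes = bfs Fr_gens 11. Proof. by vm_compute. Qed.
Definition Fr_buckets : seq (seq dmx) := Eval vm_compute in buckets Fr_codes.
Lemma Fr_bucketsE : Fr_buckets = buckets Fr_codes. Proof. by vm_compute. Qed.

Definition in_Fr_codes (X : dmx) : bool := bucket_mem X Fr_buckets.
Lemma in_Fr_codesP X : in_Fr_codes X -> X \in Fr_codes.
Proof. by rewrite /in_Fr_codes Fr_bucketsE => /bucket_mem_buckets. Qed.

Definition inv_code (X : dmx) : dmx := dmx_find_inv X Fr_codes.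

Lemma inv_codeP X Y : dmx_eqb (dmx_mul X Y) dmx1 -> (dmxC X)^-1 = dmxC Y.
Proof. by rewrite dmx_eqbE => /eqP/dmxC_inv. Qed.

Lemma gen_codes_enum gs invs n : dmx1 \in bfs gs n ->
  all (fun g => has (fun h => dmx_eqb (dmx_mul g h) dmx1) invs) gs ->
  (forall x g, x \in bfs gs n -> g \in gs ++ invs -> dmx_mul g x \in bfs gs n) ->
  forall y, gen (map dmxC gs) y <-> y \in map dmxC (bfs gs n).
Proof.
move=> L1 /allP invs_ok closedL; apply: (gen_enum L1 closedL) => g /invs_ok.
by case/hasP=> h hin /inv_codeP; exists h.
Qed.

Definition Fr_gens_inv : seq dmx := Eval vm_compute in map inv_code Fr_gens.

Lemma Fr_gens_inv_ok :
  all (fun g => has (fun h => dmx_eqb (dmx_mul g h) dmx1) Fr_gens_inv) Fr_gens.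
Proof. by vm_compute. Qed.

Lemma Fr_codes_closed :
  all (fun x => all (fun g => in_Fr_codes (dmx_mul g x)) (Fr_gens ++ Fr_gens_inv)) Fr_codes.
Proof. by vm_compute. Qed.

Lemma Fr_gensC : map dmxC Fr_gens = [:: G1; G2; FUM].
Proof. by rewrite /Fr_gens /= dmxC_G1 dmxC_G2 dmxC_FUM. Qed.

Lemma Fr_enum y : Fr y <-> y \in map dmxC Fr_codes.
Proof.
rewrite /Fr -Fr_gensC Fr_codesE; apply: (gen_codes_enum _ Fr_gens_inv_ok); rewrite -?Fr_codesE.
- by vm_compute.
- move=> x g xL gin; apply: in_Fr_codesP.
  by move/allP: Fr_codes_closed => /(_ x xL) /allP; apply.
Qed.

Lemma Fr_gens_unit : {in [:: G1; G2; FUM], forall g, g \is a GRing.unit}.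
Proof.
rewrite -Fr_gensC => g /mapP[c cin ->].
have /hasP[h _] := allP Fr_gens_inv_ok c cin.
by rewrite dmx_eqbE => /eqP/dmxC_unit.
Qed.

Lemma Fr_unit x : Fr x -> x \is a GRing.unit.
Proof. by case/(gen_unit_inv Fr_gens_unit). Qed.
Lemma FrM x y : Fr x -> Fr y -> Fr (x * y).
Proof. exact: gen_mul. Qed.
Lemma FrV x : Fr x -> Fr x^-1.
Proof. by case/(gen_unit_inv Fr_gens_unit). Qed.

Lemma Fr_dmxC X : in_Fr_codes X -> Fr (dmxC X).
Proof. by move/in_Fr_codesP => XF; apply/Fr_enum/map_f. Qed.

Lemma mem_dnum_undup l acc : {subset l ++ acc <= dnum_undup l acc}.
Proof.
elim: l acc => [|y l IH] acc x //=; rewrite in_cons => /orP[/eqP->|xl]; apply: IH.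
  by case: ifP => [|_]; rewrite mem_cat ?mem_head ?orbT // dnum_memE => ->; rewrite orbT.
move: xl; rewrite !mem_cat => /orP[->//|xacc].
by case: ifP => _; rewrite ?in_cons xacc !orbT.
Qed.

Definition Fr_entries : seq dnum :=
  Eval vm_compute in dnum_undup (flatten (map dmx_entries Fr_codes)) [::].
Lemma Fr_entriesE : Fr_entries = dnum_undup (flatten (map dmx_entries Fr_codes)) [::].
Proof. by vm_compute. Qed.
Lemma Fr_entries_cert : pairwise_distinct_cert Fr_entries.
Proof. by vm_compute. Qed.

Lemma dmxC_inj_Fr : {in Fr_codes &, injective dmxC}.
Proof.
have entries X : X \in Fr_codes -> X \in [pred X | all (mem Fr_entries) (dmx_entries X)].
  move=> XF; rewrite inE; apply/allP => e eX; rewrite Fr_entriesE.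
  by apply: mem_dnum_undup; rewrite cats0; apply/flatten_mapP; exists X.
by move=> X Y /entries XF /entries YF; apply: (dmxC_inj Fr_entries_cert).
Qed.

Lemma uniq_map_dmxC L : {subset L <= Fr_codes} -> uniq (map dmxC L) = uniq L.
Proof. by move=> LF; apply: map_inj_in_uniq => X Y /LF XF /LF YF; apply: dmxC_inj_Fr. Qed.

Lemma mem_map_dmxC L X : {subset L <= Fr_codes} -> X \in Fr_codes ->
  (dmxC X \in map dmxC L) = (X \in L).
Proof.
move=> LF XF; apply/mapP/idP => [[Y YL e]|XL]; last by exists X.
by rewrite (dmxC_inj_Fr XF (LF Y YL) e).
Qed.

Definition Fr_list : seq M3 := map dmxC Fr_codes.

Lemma Fr_list_uniq : uniq Fr_list.
Proof. by rewrite /Fr_list uniq_map_dmxC // -dmx_uniqE; vm_compute. Qed.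
Lemma size_Fr_list : size Fr_list = 648%N.
Proof. by rewrite size_map; vm_compute. Qed.
Lemma card_Fr : has_card Fr 648.
Proof. by exists Fr_list; split; [exact: Fr_list_uniq | exact: size_Fr_list | exact: Fr_enum]. Qed.

(** * S_3(F) and its conjugates *)

Definition G1_inv_code : dmx := Eval vm_compute in inv_code G1_code.
Definition G2sq_code : dmx := dmx_mul G2_code G2_code.
Definition G2sq_inv_code : dmx := Eval vm_compute in inv_code G2sq_code.

Lemma G1_inv : G1^-1 = dmxC G1_inv_code.
Proof. by rewrite -dmxC_G1; apply: inv_codeP; vm_compute. Qed.
Lemma G2sq_inv : (G2 ^+ 2)^-1 = dmxC G2sq_inv_code.
Proof. by rewrite expr2 -dmxC_G2 -dmxC_mul; apply: inv_codeP; vm_compute. Qed.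

Definition A_code : dmx := dmx_mul (dmx_mul G1_code G2sq_code) G1_inv_code.
Definition B_code : dmx := dmx_mul (dmx_mul G1_code G2sq_inv_code) G1_code.
Definition N_gens : seq dmx := [:: A_code; B_code].
Definition N_gens_inv : seq dmx := Eval vm_compute in map inv_code N_gens.
Definition N_codes : seq dmx := Eval vm_compute in bfs N_gens 10.
Lemma N_codesE : N_codes = bfs N_gens 10. Proof. by vm_compute. Qed.

Lemma N_gensC : map dmxC N_gens = [:: A; B].
Proof.
by rewrite /N_gens /= !dmxC_mul dmxC_G1 dmxC_G2 -expr2 -G1_inv -G2sq_inv.
Qed.

Lemma N_codes_closed :
  all (fun x => all (fun g => dmx_mem (dmx_mul g x) N_codes) (N_gens ++ N_gens_inv)) N_codes.
Proof. by vm_compute. Qed.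

Lemma Ngrp_enum y : Ngrp y <-> y \in map dmxC N_codes.
Proof.
rewrite /Ngrp -N_gensC N_codesE; apply: (@gen_codes_enum _ N_gens_inv); rewrite -?N_codesE.
- by vm_compute.
- by vm_compute.
- move=> x g xN gin; rewrite -dmx_memE.
  by move/allP: N_codes_closed => /(_ x xN) /allP; apply.
Qed.

Definition H3_powers : seq dmx := [:: dmx1; H3_code; dmx_mul H3_code H3_code].
Definition S3_codes : seq dmx :=
  Eval vm_compute in [seq dmx_mul n h | n <- N_codes, h <- H3_powers].
Lemma S3_codesE : S3_codes = [seq dmx_mul n h | n <- N_codes, h <- H3_powers].
Proof. by vm_compute. Qed.

Lemma S3F_enum y : S3F y <-> y \in map dmxC S3_codes.
Proof.
have H3_powersC : map dmxC H3_powers = [:: 1; H3; H3 ^+ 2].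
  by rewrite -dmxC_H3 -dmxC1 expr2 -dmxC_mul.
rewrite S3_codesE; split.
  case=> _ /Ngrp_enum/mapP[n nN ->] hy; apply/mapP.
  have : y \in [seq dmxC n * k | k <- [:: 1; H3; H3 ^+ 2]].
    apply/mapP; case: hy => ->; [exists 1 | exists H3 | exists (H3 ^+ 2)];
      by rewrite ?mulr1 // mem_seq3 eqxx ?orbT ?orTb.
  rewrite -H3_powersC -map_comp => /mapP[h hH ->].
  by exists (dmx_mul n h); [exact: allpairs_f | rewrite dmxC_mul].
case/mapP => _ /allpairsP[[n h] /= [nN hH ->]] ->; rewrite dmxC_mul.
exists (dmxC n); first by apply/Ngrp_enum/map_f.
have : dmxC h \in [:: 1; H3; H3 ^+ 2] by rewrite -H3_powersC map_f.
by rewrite !inE => /or3P[] /eqP->; [apply: Or31; rewrite mulr1 | apply: Or32 | apply: Or33].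
Qed.

Lemma codes_subgroup (P : M3 -> Prop) Ps : (forall x, P x <-> x \in map dmxC Ps) ->
  all in_Fr_codes Ps -> dmx1 \in Ps ->
  all (fun x => all (fun y => dmx_mem (dmx_mul x y) Ps) Ps) Ps ->
  all (fun x => has (fun y => dmx_eqb (dmx_mul x y) dmx1) Ps) Ps ->
  is_subgroup_of Fr P.
Proof.
move=> PPs /allP PsF Ps1 /allP PsM /allP PsV; split.
- by move=> x /PPs/mapP[c cin ->]; apply/Fr_dmxC/PsF.
- by apply/PPs; rewrite -dmxC1 map_f.
- move=> x y /PPs/mapP[c cin ->] /PPs/mapP[d din ->]; apply/PPs.
  by rewrite -dmxC_mul map_f // -dmx_memE (allP (PsM c cin)).
- move=> x /PPs/mapP[c cin ->]; have /hasP[d din /inv_codeP->] := PsV c cin.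
  by apply/PPs/map_f.
Qed.

Lemma S3F_subgroup : is_subgroup_of Fr S3F.
Proof. by apply: (codes_subgroup S3F_enum); vm_compute. Qed.

Definition conj_codes (Vc Vi : dmx) (Ps : seq dmx) : seq dmx :=
  [seq dmx_mul (dmx_mul Vc s) Vi | s <- Ps].

Lemma conjset_enum V Vc Vi (P : M3 -> Prop) Ps : dmxC Vc = V ->
  dmx_eqb (dmx_mul Vc Vi) dmx1 -> (forall x, P x <-> x \in map dmxC Ps) ->
  forall x, conjset V P x <-> x \in map dmxC (conj_codes Vc Vi Ps).
Proof.
move=> <- /inv_codeP VV PPs x; rewrite /conj_codes -map_comp; split.
- case=> s /PPs/mapP[c cin ->] ->; apply/mapP; exists c => //=.
  by rewrite !dmxC_mul VV.
- case/mapP => c cin ->; exists (dmxC c); first exact/PPs/map_f.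
  by rewrite /= !dmxC_mul VV.
Qed.

Definition V2_code : dmx := dmx_mul FUM_code (dmx_mul FUM_code FUM_code).
Definition V3_code : dmx := dmx_mul (dmx_mul G1_code V2_code) G1_inv_code.
Definition V4_code : dmx := dmx_mul V3_code V2_code.
Definition V2_inv_code : dmx := Eval vm_compute in inv_code V2_code.
Definition V3_inv_code : dmx := Eval vm_compute in inv_code V3_code.
Definition V4_inv_code : dmx := Eval vm_compute in inv_code V4_code.

Lemma dmxC_V2 : dmxC V2_code = V2.
Proof. by rewrite /V2 !dmxC_mul dmxC_FUM !exprS expr0 mulr1. Qed.
Lemma dmxC_V3 : dmxC V3_code = V3.
Proof. by rewrite /V3_code 2!dmxC_mul dmxC_V2 dmxC_G1 -G1_inv. Qed.
Lemma dmxC_V4 : dmxC V4_code = V4.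
Proof. by rewrite /V4_code dmxC_mul dmxC_V3 dmxC_V2. Qed.

Definition sylow_codes (i : 'I_4) : seq dmx :=
  match val i with
  | 0 => S3_codes
  | 1 => conj_codes V2_code V2_inv_code S3_codes
  | 2 => conj_codes V3_code V3_inv_code S3_codes
  | _ => conj_codes V4_code V4_inv_code S3_codes
  end.

Lemma four_sylows_enum i x : four_sylows i x <-> x \in map dmxC (sylow_codes i).
Proof.
case: i => [[|[|[|[|//]]]] ?].
- exact: S3F_enum.
- by apply: (conjset_enum dmxC_V2 _ S3F_enum); vm_compute.
- by apply: (conjset_enum dmxC_V3 _ S3F_enum); vm_compute.
- by apply: (conjset_enum dmxC_V4 _ S3F_enum); vm_compute.
Qed.

Lemma four_sylows_subgroup i : is_subgroup_of Fr (four_sylows i).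
Proof.
have Fr_conj Vc V : dmxC Vc = V -> in_Fr_codes Vc ->
    is_subgroup_of Fr (conjset V S3F).
  move=> <- /Fr_dmxC FrV'; exact: (conjset_subgroup FrM FrV Fr_unit FrV' S3F_subgroup).
case: i => [[|[|[|[|//]]]] ?].
- exact: S3F_subgroup.
- by apply: (Fr_conj _ _ dmxC_V2); vm_compute.
- by apply: (Fr_conj _ _ dmxC_V3); vm_compute.
- by apply: (Fr_conj _ _ dmxC_V4); vm_compute.
Qed.

Lemma sylow_codes_ok i :
  [&& dmx_uniq (sylow_codes i), size (sylow_codes i) == 81%N & all in_Fr_codes (sylow_codes i)].
Proof. by case: i => [[|[|[|[|//]]]] ?]; vm_compute. Qed.

Lemma sylow_codes_differ i j : (i == j) ||
  let Pj := sylow_codes j in has (fun x => ~~ dmx_mem x Pj) (sylow_codes i).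
Proof. by case: i => [[|[|[|[|//]]]] ?]; case: j => [[|[|[|[|//]]]] ?]; vm_compute. Qed.

Lemma sylow_codes_sub i : {subset sylow_codes i <= Fr_codes}.
Proof. by case/and3P: (sylow_codes_ok i) => _ _ /allP sF x /sF/in_Fr_codesP. Qed.

Definition sylow_list (i : 'I_4) : seq M3 := map dmxC (sylow_codes i).

Lemma sylow_list_uniq i : uniq (sylow_list i).
Proof.
rewrite /sylow_list uniq_map_dmxC; last exact: sylow_codes_sub.
by rewrite -dmx_uniqE; case/and3P: (sylow_codes_ok i).
Qed.

Lemma size_sylow_list i : size (sylow_list i) = 81%N.
Proof. by rewrite size_map; case/and3P: (sylow_codes_ok i) => _ /eqP. Qed.

Lemma four_sylows_inj i j : same_set (four_sylows i) (four_sylows j) -> i = j.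
Proof.
move=> eqij; apply/eqP; case/orP: (sylow_codes_differ i j) => // /hasP[c ci /negP[]].
rewrite dmx_memE -(mem_map_dmxC (@sylow_codes_sub j) (@sylow_codes_sub i c ci)).
by apply/four_sylows_enum/eqij/four_sylows_enum/map_f.
Qed.

(** * Counting Sylow 3-subgroups *)

Local Close Scope ring_scope.

Definition FrT : Type := seq_sub Fr_list.
HB.instance Definition _ := Finite.on FrT.

Lemma Fr_list1 : (1%R : M3) \in Fr_list.
Proof. exact/Fr_enum/Defs.gen1. Qed.

Definition FrT_one : FrT := SeqSub Fr_list1.
Definition FrT_mul (x y : FrT) : FrT := insubd FrT_one (ssval x * ssval y)%R.
Definition FrT_inv (x : FrT) : FrT := insubd FrT_one (ssval x)^-1%R.

Lemma FrT_val_Fr (x : FrT) : Fr (ssval x).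
Proof. exact/Fr_enum/ssvalP. Qed.

Lemma val_FrT_mul (x y : FrT) : ssval (FrT_mul x y) = (ssval x * ssval y)%R.
Proof. by rewrite insubdK //; apply/Fr_enum/FrM; apply: FrT_val_Fr. Qed.
Lemma val_FrT_inv (x : FrT) : ssval (FrT_inv x) = (ssval x)^-1%R.
Proof. by rewrite insubdK //; apply/Fr_enum/FrV/FrT_val_Fr. Qed.

Lemma FrT_mulA : associative FrT_mul.
Proof. by move=> x y z; apply: val_inj; rewrite /= !val_FrT_mul mulrA. Qed.
Lemma FrT_mul1 : left_id FrT_one FrT_mul.
Proof. by move=> x; apply: val_inj; rewrite /= val_FrT_mul mul1r. Qed.
Lemma FrT_mulV : left_inverse FrT_one FrT_inv FrT_mul.
Proof.
move=> x; apply: val_inj.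
by rewrite /= val_FrT_mul val_FrT_inv mulVr //; apply/Fr_unit/FrT_val_Fr.
Qed.

HB.instance Definition _ := Finite_isGroup.Build FrT FrT_mulA FrT_mul1 FrT_mulV.

Lemma three_part_648 : (648`_3)%N = 81%N.
Proof. by rewrite p_part; vm_compute. Qed.

Lemma Sylow_count_648 n : n %| 648 -> n %% 3 = 1 -> 4 <= n -> n = 4.
Proof.
move=> n_dvd n_mod n_ge4; have n_le : n < 649 by rewrite ltnS dvdn_leq.
have chk : all (fun k => [&& k %| 648, k %% 3 == 1 & 4 <= k] ==> (k == 4))
  (iota 0 649) by vm_compute.
have := allP chk n; rewrite mem_iota leq0n add0n n_le => /(_ isT).
by rewrite n_dvd n_mod n_ge4 eqxx /= => /eqP.
Qed.

Local Open Scope group_scope.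

Lemma card_FrT : #|[set: FrT]| = 648.
Proof. by rewrite cardsT card_seq_sub ?Fr_list_uniq // size_Fr_list. Qed.

Definition valset (t : seq M3) : {set FrT} := [set x : FrT | ssval x \in t].

Lemma card_valset t : uniq t -> {subset t <= Fr_list} -> #|valset t| = size t.
Proof.
move=> ut tF; have val_t : valset t =i (pmap insub t : seq FrT).
  by move=> x; rewrite inE mem_pmap_sub.
rewrite (eq_card val_t).
have /card_uniqP -> : uniq (pmap insub t : seq FrT) by apply: pmap_sub_uniq.
rewrite size_pmap_sub -[RHS](count_predT t); apply: eq_in_count => x /tF.
by rewrite /= => ->.
Qed.

Lemma valset_group (P : M3 -> Prop) t : is_subgroup_of Fr P ->
  (forall x, P x <-> x \in t) -> group_set (valset t).
Proof.
move=> [_ P1 PM _] Pt; apply/group_setP; split; first by rewrite inE; apply/Pt.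
by move=> x y; rewrite !inE => /Pt Px /Pt Py; rewrite val_FrT_mul; apply/Pt/PM.
Qed.

Lemma valset_inj s t : {subset s <= Fr_list} -> {subset t <= Fr_list} ->
  valset s = valset t -> s =i t.
Proof.
move=> sF tF st x; apply/idP/idP => [xs|xt].
- have : SeqSub (sF x xs) \in valset t by rewrite -st inE.
  by rewrite inE.
- have : SeqSub (tF x xt) \in valset s by rewrite st inE.
  by rewrite inE.
Qed.

Lemma valset_Syl3 (P : M3 -> Prop) t (sgP : is_subgroup_of Fr P)
    (Pt : forall x, P x <-> x \in t) :
  uniq t -> size t = 81%N -> Group (valset_group sgP Pt) \in 'Syl_3([set: FrT]).
Proof.
move=> ut st; have tF : {subset t <= Fr_list}.
  by case: sgP => PF _ _ _ x /Pt /PF /Fr_enum.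
by rewrite inE pHallE subsetT /= card_valset // st card_FrT three_part_648.
Qed.

Definition sylow_group (i : 'I_4) : {group FrT} :=
  Group (valset_group (four_sylows_subgroup i) (four_sylows_enum i)).

Lemma sylow_group_Syl3 i : sylow_group i \in 'Syl_3([set: FrT]).
Proof. exact: valset_Syl3 (sylow_list_uniq i) (size_sylow_list i). Qed.

Lemma sylow_list_sub i : {subset sylow_list i <= Fr_list}.
Proof. by move=> x /mapP[c /sylow_codes_sub cF ->]; apply: map_f. Qed.

Lemma sylow_group_inj : injective sylow_group.
Proof.
move=> i j /(congr1 val) /= /(valset_inj (@sylow_list_sub i) (@sylow_list_sub j)) eq_ij.
apply: four_sylows_inj => x; split=> /four_sylows_enum Px; apply/four_sylows_enum.
- by rewrite -[_ \in _]/(x \in sylow_list j) -eq_ij.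
- by rewrite -[_ \in _]/(x \in sylow_list i) eq_ij.
Qed.

Lemma Syl3_FrT : 'Syl_3([set: FrT]) = sylow_group @: [set: 'I_4].
Proof.
have sub : sylow_group @: [set: 'I_4] \subset 'Syl_3([set: FrT]).
  by apply/subsetP => P /imsetP[i _ ->]; exact: sylow_group_Syl3.
have card_im : #|sylow_group @: [set: 'I_4]| = 4.
  by rewrite card_imset ?cardsT ?card_ord //; exact: sylow_group_inj.
apply/eqP; rewrite eq_sym eqEcard sub card_im (@Sylow_count_648 #|'Syl_3([set: FrT])|) //.
- by rewrite -card_FrT card_Syl_dvd.
- exact: card_Syl_mod.
- by rewrite -card_im subset_leq_card.
Qed.

Lemma has_card_size (P : M3 -> Prop) n s : uniq s -> (forall x, P x <-> x \in s) ->
  has_card P n -> n = size s.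
Proof.
move=> us Ps [t [ut <- Pt]]; apply: perm_size; apply: uniq_perm => // x.
by apply/idP/idP => h; [apply/Ps/Pt | apply/Pt/Ps].
Qed.

Lemma is_Sylow_same_set p G (H K : M3 -> Prop) :
  same_set H K -> is_Sylow p G K -> is_Sylow p G H.
Proof.
move=> HK [[KG K1 KM KV] [nG [nK [cG [s [us ss Ks] e]]]]]; split.
  split; [by move=> x /HK/KG | exact/HK | | by move=> x /HK/KV/HK].
  by move=> x y /HK Kx /HK Ky; apply/HK/KM.
exists nG, nK; split=> //; exists s; split=> // x.
by split=> [/HK/Ks | /Ks/HK].
Qed.

Lemma four_sylows_Sylow i : is_Sylow 3 Fr (four_sylows i).
Proof.
split; first exact: four_sylows_subgroup.
exists 648%N, 81%N; split; [exact: card_Fr | | by rewrite three_part_648].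
exists (sylow_list i); split; [exact: sylow_list_uniq | exact: size_sylow_list |].
exact: four_sylows_enum.
Qed.

Lemma Sylow_Fr_four H : is_Sylow 3 Fr H -> exists i : 'I_4, same_set H (four_sylows i).
Proof.
case=> sgH [nG [nH [cG [s [us <- Hs] e]]]].
have nG648 : nG = 648%N by rewrite (has_card_size Fr_list_uniq Fr_enum cG) size_Fr_list.
have : Group (valset_group sgH Hs) \in 'Syl_3([set: FrT]).
  by apply: valset_Syl3 => //; rewrite e nG648 three_part_648.
rewrite Syl3_FrT => /imsetP[i _ /(congr1 val) /= eq_s]; exists i => x.
have sF : {subset s <= Fr_list} by case: sgH => HF _ _ _ y /Hs /HF /Fr_enum.
have e_si := valset_inj sF (@sylow_list_sub i) eq_s.
split=> [/Hs xs | /four_sylows_enum xi]; [apply/four_sylows_enum | apply/Hs].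
- by rewrite -[_ \in _]/(x \in sylow_list i) -e_si.
- by rewrite e_si.
Qed.

Theorem lemma5 :
  (forall H : M3 -> Prop,
     is_Sylow 3 Fr H <-> exists i : 'I_4, same_set H (four_sylows i)) /\
  (forall i j : 'I_4, same_set (four_sylows i) (four_sylows j) -> i = j).
Proof.
split; last exact: four_sylows_inj.
move=> H; split; first exact: Sylow_Fr_four.
by case=> i HK; apply: is_Sylow_same_set HK (four_sylows_Sylow i).
Qed.
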